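(* Let $X$ be a compact Hausdorff space, $\varphi:X\to X$ a homeomorphism, and $F\in C(X)\rtimes_\varphi\mathbb{Z}^+$. For every $x\in X$, $$\|\Pi_x(F)\|=\sup\{\|\pi_y(F)\| : y\in\mathrm{Orbit}(x)\},$$ where $\mathrm{Orbit}(x)=\{\varphi^n(x):n\in\mathbb{Z}\}$.
   Context: Semicrossed product: let $\mathcal{A}_0$ be the algebra generated by $C(X)$ and a symbol $U$ subject to $fU=U(f\circ\varphi)$, with elements $\sum_{n=0}^NU^nf_n$, $f_n\in C(X)$; $C(X)\rtimes_\varphi\mathbb{Z}^+$ is its completion in the norm $\sup_\pi\|\pi(F)\|$ over homomorphisms $\pi$ into $\mathcal{B}(\mathcal{H})$ that are $*$-representations on $C(X)$ with $\pi(U)$ an isometry (these extend to the completion). For $y\in X$ set $y_n=\varphi^{n-1}(y)$ and define $\pi_y$ on $\ell^2(\mathbb{N})$ by $\pi_y(f)(z_1,z_2,\dots)=(f(y_1)z_1,f(y_2)z_2,\dots)$, $\pi_y(U)(z_1,z_2,\dots)=(0,z_1,z_2,\dots)$. $\Pi_x$ is the representation on $\ell^2(\mathbb{Z})$ with $(\Pi_x(U)\xi)_n=\xi_{n-1}$ (bilateral right shift) and $(\Pi_x(f)\xi)_n=f(\varphi^n(x))\xi_n$. *)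

From HB Require Import structures.
From mathcomp Require Import all_boot all_order all_algebra.
From mathcomp Require Import all_classical all_reals all_analysis.
From mathcomp Require Import complex.
Set Implicit Arguments. Unset Strict Implicit. Unset Printing Implicit Defensive.
Import Order.TTheory GRing.Theory Num.Theory.
Import numFieldNormedType.Exports.
Local Open Scope ring_scope.
Local Open Scope classical_set_scope.

Section SemicrossedDefs.
Variable R : realType.

Definition cabs (z : R[i]) : R := complex.Re `|z|.
Definition cabs2 (z : R[i]) : R := cabs z ^+ 2.

Record hilbert := Hilbert {
  hcar : lmodType R[i];
  hinner : hcar -> hcar -> R[i];
  hinner_linear : forall (a : R[i]) (u v w : hcar),
      hinner (a *: u + v) w = a * hinner u w + hinner v w;
  hinner_sym : forall u v : hcar, hinner u v = conjc (hinner v u);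
  hinner_ge0 : forall u : hcar, 0 <= hinner u u;
  hinner_def : forall u : hcar, hinner u u = 0 -> u = 0;
  hcomplete : forall s : nat -> hcar,
      (forall e : R, 0 < e -> exists N, forall m n, (N <= m)%N -> (N <= n)%N ->
          complex.Re (hinner (s m - s n) (s m - s n)) < e) ->
      exists l : hcar, forall e : R, 0 < e -> exists N, forall n, (N <= n)%N ->
          complex.Re (hinner (s n - l) (s n - l)) < e
}.

Definition hn2 (H : hilbert) (u : hcar H) : R := complex.Re (hinner u u).

Definition linear_op (H : hilbert) (T : hcar H -> hcar H) :=
  forall (a : R[i]) (u v : hcar H), T (a *: u + v) = a *: T u + T v.
Definition bounded_op (H : hilbert) (T : hcar H -> hcar H) :=
  exists c : R, forall u, hn2 (T u) <= c * hn2 u.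

Variable X : topologicalType.

Definition ccont (f : X -> R[i]) :=
  forall (x : X) (e : R), 0 < e -> \forall z \near x, cabs (f z - f x) < e.

Variables phi psi : X -> X.   (* psi is the inverse of the homeomorphism phi *)

(** A representation pi of A_0 into B(H) which is a *-representation on C(X)
    with pi(U) an isometry; it is given by rho = pi|_{C(X)} and V = pi(U),
    subject to the covariance relation  rho(f) V = V rho(f o phi)
    (the image of the relation fU = U(f o phi)). *)
Definition cov_rep (H : hilbert) (rho : (X -> R[i]) -> hcar H -> hcar H)
    (V : hcar H -> hcar H) :=
  (forall f, ccont f -> linear_op (rho f) /\ bounded_op (rho f)) /\
      (forall f g, ccont f -> ccont g -> forall u,
        rho (fun x => f x + g x) u = rho f u + rho g u) /\
      (forall (a : R[i]) f, ccont f -> forall u,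
        rho (fun x => a * f x) u = a *: rho f u) /\
      (forall f g, ccont f -> ccont g -> forall u,
        rho (fun x => f x * g x) u = rho f (rho g u)) /\
      (forall f, ccont f -> forall u v,
        hinner (rho f u) v = hinner u (rho (fun x => conjc (f x)) v)) /\
      (linear_op V /\ (forall u v, hinner (V u) (V v) = hinner u v)) /\
      (forall f, ccont f -> forall u, rho f (V u) = V (rho (fun x => f (phi x)) u)).

(** elements of A_0 : F = sum_{n < size G} U^n (nth 0 G n) *)
Definition A0_elt (G : seq (X -> R[i])) := forall i, ccont (nth (fun=> 0) G i).

Definition rep_apply (H : hilbert) (rho : (X -> R[i]) -> hcar H -> hcar H)
    (V : hcar H -> hcar H) (G : seq (X -> R[i])) (u : hcar H) : hcar H :=
  \sum_(n < size G) iter n V (rho (nth (fun=> 0) G n) u).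

(** Cauchy sequences of A_0 for the universal norm sup_pi ||pi(.)||;
    the semicrossed product is the completion, i.e. classes of such sequences. *)
Definition univ_cauchy (Fs : nat -> seq (X -> R[i])) :=
  forall e : R, 0 < e -> exists N, forall m n, (N <= m)%N -> (N <= n)%N ->
    forall (H : hilbert) rho V, cov_rep rho V -> forall u : hcar H,
      hn2 (rep_apply rho V (Fs m) u - rep_apply rho V (Fs n) u) <= e ^+ 2 * hn2 u.

Definition zit (n : int) (x : X) : X :=
  match n with Posz k => iter k phi x | Negz k => iter k.+1 psi x end.
Definition zorbit (x : X) : set X := [set zit n x | n in [set: int]].

(** l^2(N) (coordinate k <-> z_{k+1}) and l^2(Z) *)
Definition l2N (xi : nat -> R[i]) := cvgn (series (fun k => cabs2 (xi k))).
Definition normN (xi : nat -> R[i]) : R :=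
  Num.sqrt (limn (series (fun k => cabs2 (xi k)))).
Definition l2Z (xi : int -> R[i]) :=
  cvgn (series (fun k => cabs2 (xi (Posz k)))) /\
  cvgn (series (fun k => cabs2 (xi (Negz k)))).
Definition normZ (xi : int -> R[i]) : R :=
  Num.sqrt (limn (series (fun k => cabs2 (xi (Posz k)))) +
            limn (series (fun k => cabs2 (xi (Negz k))))).

Definition opnormN (T : (nat -> R[i]) -> (nat -> R[i])) : R :=
  sup [set normN (T xi) | xi in [set xi | l2N xi /\ normN xi <= 1]].
Definition opnormZ (T : (int -> R[i]) -> (int -> R[i])) : R :=
  sup [set normZ (T xi) | xi in [set xi | l2Z xi /\ normZ xi <= 1]].

Definition piyU (xi : nat -> R[i]) : nat -> R[i] :=
  fun k => if k is k'.+1 then xi k' else 0.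
Definition piyf (y : X) (f : X -> R[i]) (xi : nat -> R[i]) : nat -> R[i] :=
  fun k => f (iter k phi y) * xi k.
Definition pi_y (y : X) (G : seq (X -> R[i])) (xi : nat -> R[i]) : nat -> R[i] :=
  fun k => \sum_(n < size G) iter n piyU (piyf y (nth (fun=> 0) G n) xi) k.

Definition PiU (xi : int -> R[i]) : int -> R[i] := fun n => xi (n - 1).
Definition Pif (x : X) (f : X -> R[i]) (xi : int -> R[i]) : int -> R[i] :=
  fun n => f (zit n x) * xi n.
Definition Pi_x (x : X) (G : seq (X -> R[i])) (xi : int -> R[i]) : int -> R[i] :=
  fun n => \sum_(m < size G) iter m PiU (Pif x (nth (fun=> 0) G m) xi) n.

(** norms of the (extended) representations at F = lim_k Fs k *)
Definition norm_pi_y (y : X) (Fs : nat -> seq (X -> R[i])) : R :=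
  limn (fun k => opnormN (pi_y y (Fs k))).
Definition norm_Pi_x (x : X) (Fs : nat -> seq (X -> R[i])) : R :=
  limn (fun k => opnormZ (Pi_x x (Fs k))).

End SemicrossedDefs.

From HB Require Import structures.
From mathcomp Require Import all_boot all_order all_algebra.
From mathcomp Require Import all_classical all_reals all_analysis.
From mathcomp Require Import complex.
From mathcomp Require Import ring lra zify.
Set Implicit Arguments. Unset Strict Implicit. Unset Printing Implicit Defensive.
Import Order.TTheory GRing.Theory Num.Theory.
Import numFieldNormedType.Exports.
Local Open Scope ring_scope.
Local Open Scope classical_set_scope.

(* Fix [G] in [A_0].  The copy of [l2(N)] carried by the half-line [[n, +oo)] of
   [l2(Z)] is invariant under [Pi_x(G)], which acts on it as [pi_y(G)] for
   [y = phi^n x].  Since [Pi_x(G)] moves entries by less than [size G], on any finite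
   window the image of a vector agrees with the image of its truncation to a
   half-line far to the left.  Hence [||Pi_x(G)|| = sup_n ||pi_(phi^n x)(G)||].
   Each [pi_y] is a covariant representation ([l2(N)] with multiplication operators
   and the unilateral shift), so the universal Cauchy condition on [Fs] makes
   [||pi_y(Fs k)||] Cauchy uniformly in [y], and the limit in [k] commutes with the
   supremum over the orbit. *)

Section real_sequences.
Variable R : realType.
Implicit Types u : R ^nat.

Lemma cauchy_cvgn u :
  (forall e : R, 0 < e -> exists N, forall m n, (N <= m)%N -> (N <= n)%N ->
    `|u m - u n| < e) -> cvgn u.
Proof.
move=> u_cauchy; apply/cauchy_cvgP; apply: cauchy_exP => e e_gt0.
have [N uN] := u_cauchy e e_gt0; exists (u N), N => // n /= Nn.
by rewrite /ball /= uN.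
Qed.

(* One-sided Cauchy bounds suffice, since [m] and [n] play symmetric roles. *)
Lemma cauchy_le_cvgn u :
  (forall e : R, 0 < e -> exists N, forall m n, (N <= m)%N -> (N <= n)%N ->
    u m <= u n + e) -> cvgn u.
Proof.
move=> u_cauchy; apply: cauchy_cvgn => e e_gt0.
have [N uN] := u_cauchy (e / 2) (divr_gt0 e_gt0 (ltr0Sn _ 1)).
exists N => m n Nm Nn; have := uN m n Nm Nn; have := uN n m Nn Nm.
by move=> ? ?; rewrite ltr_norml; apply/andP; split; lra.
Qed.

Lemma limn_cauchy_le u N (e : R) :
  (forall m n, (N <= m)%N -> (N <= n)%N -> u m <= u n + e) -> cvgn u ->
  forall k, (N <= k)%N -> limn u <= u k + e /\ u k <= limn u + e.
Proof.
move=> uN cu k Nk; split.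
  apply: limr_le => //; near=> n; apply: uN => //; near: n; exact: nbhs_infty_ge.
rewrite -lerBlDr; apply: limr_ge => //; near=> n.
rewrite lerBlDr; apply: uN => //; near: n; exact: nbhs_infty_ge.
Unshelve. all: by end_near.
Qed.

Lemma le_sup_image (T : Type) (A : set T) (f : T -> R) (M : R) :
  (forall y, A y -> f y <= M) -> forall y, A y -> f y <= sup [set f y | y in A].
Proof.
move=> fM y Ay; apply: sup_upper_bound; last by exists y.
by split; [exists (f y), y | exists M => _ [z Az <-]; exact: fM].
Qed.

Lemma sup_image_le (T : Type) (A : set T) (f : T -> R) (M : R) :
  A !=set0 -> (forall y, A y -> f y <= M) -> sup [set f y | y in A] <= M.
Proof.
move=> [y Ay] fM; apply: ge_sup; first by exists (f y), y.
by move=> _ [z Az <-]; exact: fM.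
Qed.

Lemma sup_image_le_shift (T : Type) (A : set T) (f g : T -> R) (M e : R) :
  A !=set0 -> (forall y, A y -> g y <= M) -> (forall y, A y -> f y <= g y + e) ->
  sup [set f y | y in A] <= sup [set g y | y in A] + e.
Proof.
move=> A0 gM fg; apply: sup_image_le => // y Ay; apply: le_trans (fg y Ay) _.
by rewrite lerD2r; exact: le_sup_image gM y Ay.
Qed.

Definition uniformly_cauchy (T : Type) (A : set T) (a : nat -> T -> R) :=
  forall e : R, 0 < e -> exists N, forall m n, (N <= m)%N -> (N <= n)%N ->
    forall y, A y -> a m y <= a n y + e.

Lemma limn_sup_uniformly_cauchy (T : Type) (A : set T) (a : nat -> T -> R) :
  A !=set0 -> (forall k, exists M, forall y, A y -> a k y <= M) ->
  uniformly_cauchy A a ->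
  limn (fun k => sup [set a k y | y in A]) = sup [set limn (a ^~ y) | y in A].
Proof.
move=> A0 a_ub a_cauchy; pose b k := sup [set a k y | y in A].
have cvg_a y : A y -> cvgn (a ^~ y).
  move=> Ay; apply: cauchy_le_cvgn => e /a_cauchy[N aN].
  by exists N => m n Nm Nn; exact: aN.
have b_cauchy e : 0 < e -> exists N, forall m n, (N <= m)%N -> (N <= n)%N ->
    b m <= b n + e.
  move=> /a_cauchy[N aN]; exists N => m n Nm Nn; have [M aM] := a_ub n.
  exact: sup_image_le_shift A0 aM (aN m n Nm Nn).
have cvg_b : cvgn b by exact: cauchy_le_cvgn.
suff close e : 0 < e -> sup [set limn (a ^~ y) | y in A] <= limn b + e /\
    limn b <= sup [set limn (a ^~ y) | y in A] + e.
  apply/eqP; rewrite eq_le; apply/andP; split; apply/ler_addgt0Pr => e e_gt0.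
    exact: (close e e_gt0).2.
  exact: (close e e_gt0).1.
move=> e_gt0; have e2_gt0 : 0 < e / 2 by rewrite divr_gt0.
have [N1 aN1] := a_cauchy _ e2_gt0; have [N2 bN2] := b_cauchy _ e2_gt0.
pose N := maxn N1 N2; have [M aM] := a_ub N.
have a_close y : A y -> limn (a ^~ y) <= a N y + e / 2 /\ a N y <= limn (a ^~ y) + e / 2.
  move=> Ay; apply: (@limn_cauchy_le _ N1); last exact: leq_maxl.
  - by move=> m n Nm Nn; exact: aN1.
  - exact: cvg_a.
have [bN_ub bN_lb] : limn b <= b N + e / 2 /\ b N <= limn b + e / 2.
  by apply: (@limn_cauchy_le _ N2) => //; exact: leq_maxr.
have limn_a_ub y : A y -> limn (a ^~ y) <= M + e / 2.
  by move=> Ay; apply: le_trans (a_close y Ay).1 _; rewrite lerD2r aM.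
have := sup_image_le_shift A0 aM (fun y Ay => (a_close y Ay).1).
have := sup_image_le_shift A0 limn_a_ub (fun y Ay => (a_close y Ay).2).
rewrite -/(b N); split; lra.
Qed.

End real_sequences.

Section nonnegative_series.
Variable R : realType.
Implicit Types (a b : R ^nat) (M : R).

Definition ssum a : R := limn (series a).

Lemma ssum0 : ssum 0 = 0.
Proof.
rewrite /ssum (_ : series 0 = fun=> 0); first exact: lim_cst.
by apply: funext => n; rewrite /series /= big1.
Qed.

Lemma is_cvg_series0 : cvgn (series (0 : R ^nat)).
Proof.
rewrite (_ : series 0 = fun=> 0); first exact: is_cvg_cst.
by apply: funext => n; rewrite /series /= big1.
Qed.

Lemma ssumZD (c : R) a b : cvgn (series a) -> cvgn (series b) ->
  ssum (c *: a + b) = c * ssum a + ssum b.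
Proof.
move=> ca cb; rewrite /ssum lim_seriesD //; last exact: is_cvg_seriesZ.
by rewrite lim_seriesZ.
Qed.

Lemma ssumZ (c : R) a : cvgn (series a) -> ssum (c *: a) = c * ssum a.
Proof. exact: lim_seriesZ. Qed.

Lemma ssumN a : cvgn (series a) -> ssum (- a) = - ssum a.
Proof. exact: lim_seriesN. Qed.

Lemma series_shift a m n :
  series a (n + m)%N = series a m + series (fun k => a (k + m)%N) n.
Proof. by rewrite series_addn; congr (_ + _); rewrite -{1}[m]add0n big_addn addnK. Qed.

Lemma is_cvg_series_shift a m :
  cvgn (series (fun k => a (k + m)%N)) <-> cvgn (series a).
Proof.
have shiftE : (fun n => series a (n + m)%N) =
    (fun n => series a m + series (fun k => a (k + m)%N) n).
  by apply: funext => n; rewrite series_shift.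
split=> [cvg_shift | /cvg_ex[l cvg_a]].
  apply/cvg_ex; exists (series a m + ssum (fun k => a (k + m)%N)).
  by rewrite -(cvg_shiftn m) shiftE; apply: cvgD => //; exact: cvg_cst.
apply/cvg_ex; exists (l - series a m).
rewrite -(cvg_shiftn m) in cvg_a.
have -> : series (fun k => a (k + m)%N) = (fun n => series a (n + m)%N - series a m).
  by apply: funext => n; rewrite series_shift addrC addKr.
by apply: cvgB => //; exact: cvg_cst.
Qed.

Lemma ssum_shift a m : cvgn (series a) ->
  ssum a = series a m + ssum (fun k => a (k + m)%N).
Proof.
move=> ca; have cm := (is_cvg_series_shift a m).2 ca.
apply: cvg_lim => //; rewrite -(cvg_shiftn m).
under eq_fun do rewrite series_shift.
by apply: cvgD => //; exact: cvg_cst.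
Qed.

Definition delay (V : zmodType) (a : nat -> V) : nat -> V :=
  fun k => if k is k'.+1 then a k' else 0.

Lemma series_delay a n : series (delay a) n.+1 = series a n.
Proof. by rewrite /series /= big_nat_recl //= add0r. Qed.

Lemma cvg_series_delay a : cvgn (series a) -> series (delay a) @ \oo --> ssum a.
Proof. by move=> ca; rewrite -cvg_shiftS /=; under eq_fun do rewrite series_delay. Qed.

Lemma is_cvg_series_delay a : cvgn (series a) -> cvgn (series (delay a)).
Proof. by move=> /cvg_series_delay cd; apply/cvg_ex; eexists; exact: cd. Qed.

Lemma ssum_delay a : cvgn (series a) -> ssum (delay a) = ssum a.
Proof. by move=> /cvg_series_delay; exact: cvg_lim. Qed.

Section nonnegative.
Variable a : R ^nat.
Hypothesis a_ge0 : forall k, 0 <= a k.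

Lemma ler_series_ssum n : cvgn (series a) -> series a n <= ssum a.
Proof.
move=> ca; apply: (nondecreasing_cvgn_le _ ca).
by apply: nondecreasing_series => k _ _; exact: a_ge0.
Qed.

Lemma is_cvg_series_ub M : (forall n, series a n <= M) -> cvgn (series a).
Proof.
move=> aM; apply: nondecreasing_is_cvgn.
  by apply: nondecreasing_series => k _ _; exact: a_ge0.
by exists M => _ [n _ <-].
Qed.

Lemma ssum_le_ub M : (forall n, series a n <= M) -> ssum a <= M.
Proof.
move=> aM; apply: limr_le; first exact: is_cvg_series_ub aM.
exact: nearW.
Qed.

Lemma ssum_ge0 : cvgn (series a) -> 0 <= ssum a.
Proof. by move=> ca; apply: le_trans (ler_series_ssum 0 ca); rewrite /series /= big_geq. Qed.

Lemma ler_term_ssum k : cvgn (series a) -> a k <= ssum a.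
Proof.
move=> ca; apply: le_trans (ler_series_ssum k.+1 ca).
by rewrite /series /= big_nat_recr //= lerDr; apply: sumr_ge0 => i _; exact: a_ge0.
Qed.

Lemma ssum_eq0 k : cvgn (series a) -> ssum a = 0 -> a k = 0.
Proof. by move=> ca sa0; apply/eqP; rewrite eq_le a_ge0 andbT -sa0 ler_term_ssum. Qed.

Lemma is_cvg_series_le b : (forall k, a k <= b k) -> cvgn (series b) ->
  cvgn (series a).
Proof. by move=> ab; apply: series_le_cvg => // k; exact: le_trans (ab k). Qed.

Lemma ssum_le b : (forall k, a k <= b k) -> cvgn (series b) -> ssum a <= ssum b.
Proof. by move=> ab cb; apply: lim_series_le => //; exact: is_cvg_series_le ab cb. Qed.

End nonnegative.

End nonnegative_series.

Section complex_modulus.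
Variable R : realType.
Local Notation C := R[i].
Local Notation Re := (@complex.Re R).
Local Notation Im := (@complex.Im R).
Implicit Types z w : C.

Lemma cabsE z : cabs z = Num.sqrt (Re z ^+ 2 + Im z ^+ 2).
Proof. by rewrite /cabs normc_def. Qed.

Lemma cabs_ge0 z : 0 <= cabs z.
Proof. by rewrite cabsE sqrtr_ge0. Qed.

Lemma normcE z : `|z| = Complex (cabs z) 0.
Proof. by rewrite normc_def cabsE. Qed.

Lemma cabsD z w : cabs (z + w) <= cabs z + cabs w.
Proof. by have := ler_normD z w; rewrite !normcE lecE /= => /andP[]. Qed.

Lemma cabsM z w : cabs (z * w) = cabs z * cabs w.
Proof. by have := normrM z w; rewrite !normcE /= => -[]; rewrite !mulr0 !mul0r subr0. Qed.

Lemma cabs_conj z : cabs z^* = cabs z.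
Proof. by case: z => a b; rewrite !cabsE /= sqrrN. Qed.

Lemma cabs2E z : cabs2 z = Re z ^+ 2 + Im z ^+ 2.
Proof. by rewrite /cabs2 cabsE sqr_sqrtr // addr_ge0 // sqr_ge0. Qed.

Lemma cabs2_ge0 z : 0 <= cabs2 z.
Proof. by rewrite cabs2E addr_ge0 // sqr_ge0. Qed.

Lemma cabs2M z w : cabs2 (z * w) = cabs2 z * cabs2 w.
Proof. by rewrite /cabs2 cabsM exprMn. Qed.

Lemma cabs2_0 : cabs2 0 = 0 :> R.
Proof. by rewrite cabs2E /= expr0n /= addr0. Qed.

Lemma cabs2_eq0 z : cabs2 z = 0 -> z = 0.
Proof.
case: z => a b; rewrite cabs2E /= => /eqP; rewrite paddr_eq0 ?sqr_ge0 //.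
by rewrite !sqrf_eq0 => /andP[/eqP-> /eqP->].
Qed.

Lemma Re_sqr_le_cabs2 z : `|Re z| ^+ 2 <= cabs2 z.
Proof. by rewrite cabs2E real_normK ?num_real // lerDl sqr_ge0. Qed.

Lemma Im_sqr_le_cabs2 z : `|Im z| ^+ 2 <= cabs2 z.
Proof. by rewrite cabs2E real_normK ?num_real // lerDr sqr_ge0. Qed.

Lemma cabs2D_weighted (t : R) z w : 0 < t ->
  cabs2 (z + w) <= (1 + t) * cabs2 z + (1 + t^-1) * cabs2 w.
Proof.
move=> t_gt0; case: z => a b; case: w => c d; rewrite !cabs2E /= -subr_ge0.
have -> : (1 + t) * (a ^+ 2 + b ^+ 2) + (1 + t^-1) * (c ^+ 2 + d ^+ 2) -
    ((a + c) ^+ 2 + (b + d) ^+ 2) = t^-1 * ((t * a - c) ^+ 2 + (t * b - d) ^+ 2).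
  by field; rewrite gt_eqF.
by apply: mulr_ge0; [rewrite invr_ge0 ltW | rewrite addr_ge0 // sqr_ge0].
Qed.

Lemma cabs2D z w : cabs2 (z + w) <= 2 * cabs2 z + 2 * cabs2 w.
Proof. by have := cabs2D_weighted z w ltr01; rewrite invr1. Qed.

Lemma Re_mul_conj z w : Re (z * w^*) = (cabs2 (z + w) - cabs2 (z - w)) / 4.
Proof. by case: z => a b; case: w => c d; rewrite !cabs2E /=; field. Qed.

Lemma Im_mul_conj z w : Im (z * w^*) = Re (z * (w * 'i)^*).
Proof. by case: z => a b; case: w => c d; rewrite /=; ring. Qed.

End complex_modulus.

Section square_summable.
Variable R : realType.
Local Notation C := R[i].
Local Notation Re := (@complex.Re R).
Local Notation Im := (@complex.Im R).
Implicit Types xi eta : nat -> C.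

Definition abs2 xi : R ^nat := fun k => cabs2 (xi k).

Lemma abs2_ge0 xi k : 0 <= abs2 xi k.
Proof. exact: cabs2_ge0. Qed.

Lemma l2NE xi : l2N xi = cvgn (series (abs2 xi)).
Proof. by []. Qed.

Lemma l2N0 : l2N (0 : nat -> C).
Proof.
rewrite l2NE (_ : abs2 0 = 0); first exact: is_cvg_series0.
by apply: funext => k; exact: cabs2_0.
Qed.

Lemma l2ND xi eta : l2N xi -> l2N eta -> l2N (xi + eta).
Proof.
move=> l2xi l2eta.
apply: (@is_cvg_series_le _ _ (abs2_ge0 _) ((2 : R) *: abs2 xi + (2 : R) *: abs2 eta)).
  by move=> k; exact: cabs2D.
by apply: is_cvg_seriesD; exact: is_cvg_seriesZ.
Qed.

Lemma l2NZ (a : C) xi : l2N xi -> l2N (a *: xi).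
Proof.
move=> l2xi; rewrite l2NE (_ : abs2 _ = cabs2 a *: abs2 xi); first exact: is_cvg_seriesZ.
by apply: funext => k; exact: cabs2M.
Qed.

Lemma l2NB xi eta : l2N xi -> l2N eta -> l2N (fun k => xi k - eta k).
Proof.
move=> l2xi l2eta; have -> : (fun k => xi k - eta k) = xi + (-1) *: eta.
  by apply: funext => k; rewrite [RHS]/= scaleN1r.
by apply: l2ND => //; exact: l2NZ.
Qed.

Definition l2_pred : {pred nat -> C} := fun xi => `[< l2N xi >].

Lemma l2_submod_closed : GRing.submod_closed l2_pred.
Proof.
split=> [|a u v /asboolP l2u /asboolP l2v]; apply/asboolP; first exact: l2N0.
by apply: l2ND => //; exact: l2NZ.
Qed.

HB.instance Definition _ := GRing.isSubmodClosed.Build _ _ l2_pred l2_submod_closed.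

Record l2 := L2 { l2_seq :> nat -> C; l2_seqP : l2_seq \in l2_pred }.
HB.instance Definition _ := [isSub for l2_seq].
HB.instance Definition _ := [Choice of l2 by <:].
HB.instance Definition _ := [SubChoice_isSubLmodule of l2 by <:].

Lemma l2_l2N (u : l2) : l2N u.
Proof. exact/asboolP/l2_seqP. Qed.
Arguments l2_l2N : clear implicits.

Lemma l2_ext (u v : l2) : (forall k, u k = v k) -> u = v.
Proof. by move=> uv; apply: val_inj; apply: funext. Qed.

Definition re_dot xi eta : R ^nat := fun k => Re (xi k * (eta k)^*).
Definition im_dot xi eta : R ^nat := fun k => Im (xi k * (eta k)^*).

Lemma is_cvg_series_re_dot xi eta : l2N xi -> l2N eta -> cvgn (series (re_dot xi eta)).
Proof.
move=> l2xi l2eta.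
rewrite (_ : re_dot xi eta = 4^-1 *: (abs2 (xi + eta) - abs2 (fun k => xi k - eta k))).
  by apply: is_cvg_seriesZ; apply: is_cvg_seriesB; [exact: l2ND | exact: l2NB].
by apply: funext => k; rewrite /re_dot Re_mul_conj mulrC.
Qed.

Lemma is_cvg_series_im_dot xi eta : l2N xi -> l2N eta -> cvgn (series (im_dot xi eta)).
Proof.
move=> l2xi l2eta.
have -> : im_dot xi eta = re_dot xi ('i%C *: eta).
  by apply: funext => k; rewrite /im_dot /re_dot Im_mul_conj [eta k * _]mulrC.
by apply: is_cvg_series_re_dot => //; exact: l2NZ.
Qed.

Definition l2_inner (u v : l2) : C := Complex (ssum (re_dot u v)) (ssum (im_dot u v)).

Lemma l2_inner_linear (a : C) (u v w : l2) :
  l2_inner (a *: u + v) w = a * l2_inner u w + l2_inner v w.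
Proof.
have reu := is_cvg_series_re_dot (l2_l2N u) (l2_l2N w).
have imu := is_cvg_series_im_dot (l2_l2N u) (l2_l2N w).
have rev := is_cvg_series_re_dot (l2_l2N v) (l2_l2N w).
have imv := is_cvg_series_im_dot (l2_l2N v) (l2_l2N w).
case: a => a b; rewrite /l2_inner /=; congr Complex.
- have -> : re_dot (Complex a b *: u + v) w = a *: re_dot u w + ((- b) *: im_dot u w + re_dot v w).
    apply: funext => k; rewrite /re_dot /im_dot.
    change (Re ((Complex a b * u k + v k) * (w k)^*) =
      a * Re (u k * (w k)^*) + (- b * Im (u k * (w k)^*) + Re (v k * (w k)^*))).
    by case: (u k) => p q; case: (w k) => r t; case: (v k) => c d /=; ring.
  rewrite ssumZD //; last by apply: is_cvg_seriesD => //; exact: is_cvg_seriesZ.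
  by rewrite ssumZD //; ring.
- have -> : im_dot (Complex a b *: u + v) w = a *: im_dot u w + (b *: re_dot u w + im_dot v w).
    apply: funext => k; rewrite /re_dot /im_dot.
    change (Im ((Complex a b * u k + v k) * (w k)^*) =
      a * Im (u k * (w k)^*) + (b * Re (u k * (w k)^*) + Im (v k * (w k)^*))).
    by case: (u k) => p q; case: (w k) => r t; case: (v k) => c d /=; ring.
  rewrite ssumZD //; last by apply: is_cvg_seriesD => //; exact: is_cvg_seriesZ.
  by rewrite ssumZD //; ring.
Qed.

Lemma l2_inner_sym (u v : l2) : l2_inner u v = (l2_inner v u)^*.
Proof.
rewrite /l2_inner /=; congr Complex.
  congr ssum; apply: funext => k; rewrite /re_dot.
  by case: (u k) => a b; case: (v k) => c d /=; ring.
rewrite -ssumN; last exact: is_cvg_series_im_dot (l2_l2N v) (l2_l2N u).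
congr ssum; apply: funext => k; rewrite /im_dot.
change (Im (u k * (v k)^*) = - Im (v k * (u k)^*)).
by case: (u k) => a b; case: (v k) => c d /=; ring.
Qed.

Lemma l2_inner_self (u : l2) : l2_inner u u = Complex (ssum (abs2 u)) 0.
Proof.
rewrite /l2_inner; congr Complex.
  by congr ssum; apply: funext => k; rewrite /re_dot /abs2 cabs2E; case: (u k) => a b /=; ring.
rewrite (_ : im_dot u u = 0) ?ssum0 //.
apply: funext => k; rewrite /im_dot.
by change (Im (u k * (u k)^*) = 0); case: (u k) => a b /=; ring.
Qed.

Lemma l2_inner_ge0 (u : l2) : 0 <= l2_inner u u.
Proof. by rewrite l2_inner_self lecR ssum_ge0 //; [exact: abs2_ge0 | exact: l2_l2N]. Qed.

Lemma l2_inner_eq0 (u : l2) : l2_inner u u = 0 -> u = 0.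
Proof.
rewrite l2_inner_self => -[su0]; apply: l2_ext => k.
by apply: cabs2_eq0; exact: ssum_eq0 (@abs2_ge0 u) k (l2_l2N u) su0.
Qed.

End square_summable.
Arguments l2_l2N {R} u.

Section l2_completeness.
Variable R : realType.
Local Notation C := R[i].
Local Notation Re := (@complex.Re R).
Local Notation Im := (@complex.Im R).
Variable s : nat -> l2 R.
Hypothesis s_cauchy : forall e : R, 0 < e -> exists N, forall m n,
  (N <= m)%N -> (N <= n)%N -> ssum (abs2 (s m - s n)) < e.

Lemma cvgn_l2_coord (p : {additive C -> R}) k :
  (forall z, `|p z| ^+ 2 <= cabs2 z) -> cvgn (fun n => p (s n k)).
Proof.
move=> p_le; apply: cauchy_cvgn => e e_gt0.
have [N sN] := s_cauchy (exprn_gt0 2 e_gt0); exists N => m n Nm Nn.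
rewrite -(@ltr_pXn2r _ 2) ?nnegrE ?normr_ge0 ?(ltW e_gt0) //.
apply: le_lt_trans (sN m n Nm Nn); rewrite -raddfB.
apply: le_trans (p_le _) _.
exact: ler_term_ssum (@abs2_ge0 _ (s m - s n)) k (l2_l2N (s m - s n)).
Qed.

Definition l2_coord_limit : nat -> C :=
  fun k => Complex (limn (fun n => Re (s n k))) (limn (fun n => Im (s n k))).
Local Notation l := l2_coord_limit.

Lemma cvg_series_abs2_sub_limit m K :
  (fun n => series (abs2 (s m - s n)) K) @ \oo -->
  series (abs2 (fun k => s m k - l k)) K.
Proof.
rewrite /series /=; apply: (cvg_big (@add_continuous R^o)) => // k _.
have -> : (fun n => abs2 (s m - s n) k) =
    (fun n => (Re (s m k) - Re (s n k)) ^+ 2 + (Im (s m k) - Im (s n k)) ^+ 2).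
  by apply: funext => n; rewrite /abs2 cabs2E !raddfB.
rewrite /abs2 cabs2E !raddfB /=.
apply: cvgD; rewrite expr2; apply: cvgM; apply: cvgB; try exact: cvg_cst.
all: apply: cvgn_l2_coord => z; by [exact: Re_sqr_le_cabs2 | exact: Im_sqr_le_cabs2].
Qed.

Lemma ssum_abs2_sub_limit_le e : 0 < e -> exists N, forall m, (N <= m)%N ->
  l2N (fun k => s m k - l k) /\ ssum (abs2 (fun k => s m k - l k)) <= e.
Proof.
move=> e_gt0; have [N sN] := s_cauchy e_gt0; exists N => m Nm.
suff partial_le K : series (abs2 (fun k => s m k - l k)) K <= e.
  split; first exact: is_cvg_series_ub (@abs2_ge0 _ _) _ partial_le.
  exact: ssum_le_ub (@abs2_ge0 _ _) _ partial_le.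
rewrite -(cvg_lim _ (@cvg_series_abs2_sub_limit m K)) //.
apply: limr_le; first by apply/cvg_ex; eexists; exact: cvg_series_abs2_sub_limit.
near=> n; apply: le_trans (ler_series_ssum (@abs2_ge0 _ _) K (l2_l2N (s m - s n))) _.
by apply/ltW/sN => //; near: n; exact: nbhs_infty_ge.
Unshelve. all: by end_near.
Qed.

Lemma l2N_coord_limit : l2N l.
Proof.
have [N sN] := ssum_abs2_sub_limit_le ltr01.
have -> : l = fun k => s N k - (s N k - l k) by apply: funext => k; rewrite subKr.
by apply: l2NB; [exact: l2_l2N | exact: (sN N (leqnn N)).1].
Qed.

End l2_completeness.

Lemma l2_complete (R : realType) (s : nat -> l2 R) :
  (forall e : R, 0 < e -> exists N, forall m n, (N <= m)%N -> (N <= n)%N ->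
      complex.Re (l2_inner (s m - s n) (s m - s n)) < e) ->
  exists l : l2 R, forall e : R, 0 < e -> exists N, forall n, (N <= n)%N ->
      complex.Re (l2_inner (s n - l) (s n - l)) < e.
Proof.
move=> s_cauchy; have {}s_cauchy e : 0 < e -> exists N, forall m n, (N <= m)%N -> (N <= n)%N ->
    ssum (abs2 (s m - s n)) < e.
  by move=> /s_cauchy[N sN]; exists N => m n Nm Nn; have := sN m n Nm Nn; rewrite l2_inner_self.
have lP : l2_coord_limit s \in @l2_pred R by apply/asboolP; exact: l2N_coord_limit.
exists (L2 lP) => e e_gt0.
have [N sN] := ssum_abs2_sub_limit_le s_cauchy (divr_gt0 e_gt0 (ltr0Sn _ 1)).
exists N => n Nn; rewrite l2_inner_self; apply: le_lt_trans (sN n Nn).2 _.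
by rewrite ltr_pdivrMr // ltr_pMr // ltr1n.
Qed.

Definition l2_hilbert (R : realType) : hilbert R :=
  Hilbert (@l2_inner_linear R) (@l2_inner_sym R) (@l2_inner_ge0 R)
    (@l2_inner_eq0 R) (@l2_complete R).

Lemma hn2_l2 (R : realType) (u : hcar (l2_hilbert R)) : hn2 u = ssum (abs2 (u : l2 R)).
Proof.
change (complex.Re (l2_inner u u) = ssum (abs2 (u : l2 R))).
by rewrite l2_inner_self.
Qed.

Section shift_representation.
Variable R : realType.
Local Notation C := R[i].
Variables (X : topologicalType) (phi : X -> X).
Implicit Types (f g : X -> C) (xi : nat -> C).

Definition cbounded f := exists2 M : R, 0 <= M & forall x, cabs (f x) <= M.

Lemma ccont_cbounded f : compact [set: X] -> ccont f -> cbounded f.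
Proof.
move=> Xcpt cf.
have cov x : [set: X] x -> \forall x' \near x & M \near (+oo : set_system R),
    cabs (f x') < M.
  move=> _; exists ([set x' | cabs (f x' - f x) < 1], [set M | cabs (f x) + 1 < M]).
    by split=> /=; [exact: cf | exists (cabs (f x) + 1); split; [rewrite num_real |]].
  move=> [x' M] /= [fx'x fxM]; apply: lt_trans fxM.
  have := cabsD (f x' - f x) (f x); rewrite subrK => /le_lt_trans; apply.
  by rewrite addrC ltrD2l.
have [M [_ fM]] := (compact_near_coveringP [set: X]).1 Xcpt R _ _ _ cov.
exists `|M + 1|; first exact: normr_ge0.
move=> x; apply/ltW/(lt_le_trans (fM (M + 1) _ x _)) => //; last exact: ler_norm.
by rewrite ltrDl.
Qed.

Lemma cboundedD f g : cbounded f -> cbounded g -> cbounded (fun x => f x + g x).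
Proof.
move=> [M M0 fM] [N N0 gN]; exists (M + N) => [|x]; first exact: addr_ge0.
by apply: le_trans (cabsD _ _) _; exact: lerD.
Qed.

Lemma cboundedM f g : cbounded f -> cbounded g -> cbounded (fun x => f x * g x).
Proof.
move=> [M M0 fM] [N N0 gN]; exists (M * N) => [|x]; first exact: mulr_ge0.
by rewrite cabsM; apply: ler_pM => //; exact: cabs_ge0.
Qed.

Lemma cboundedZ (a : C) f : cbounded f -> cbounded (fun x => a * f x).
Proof.
move=> [M M0 fM]; exists (cabs a * M) => [|x]; first by rewrite mulr_ge0 ?cabs_ge0.
by rewrite cabsM; apply: ler_wpM2l => //; exact: cabs_ge0.
Qed.

Lemma cbounded_conj f : cbounded f -> cbounded (fun x => (f x)^*).
Proof. by move=> [M M0 fM]; exists M => // x; rewrite cabs_conj. Qed.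

Lemma cbounded_comp f (g : X -> X) : cbounded f -> cbounded (f \o g).
Proof. by move=> [M M0 fM]; exists M => // x; exact: fM. Qed.

Variable y : X.

Lemma abs2_piyf_le f M xi : 0 <= M -> (forall x, cabs (f x) <= M) ->
  forall k, abs2 (piyf phi y f xi) k <= M ^+ 2 * abs2 xi k.
Proof.
move=> M0 fM k; rewrite /abs2 /piyf cabs2M ler_wpM2r ?cabs2_ge0 //.
by rewrite /cabs2 lerXn2r ?nnegrE ?cabs_ge0.
Qed.

Lemma l2N_piyf f xi : cbounded f -> l2N xi -> l2N (piyf phi y f xi).
Proof.
move=> [M M0 fM] l2xi.
apply: (is_cvg_series_le (@abs2_ge0 _ _) (b := M ^+ 2 *: abs2 xi) (abs2_piyf_le xi M0 fM)).
exact: is_cvg_seriesZ.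
Qed.

Lemma ssum_abs2_piyf_le f M xi : 0 <= M -> (forall x, cabs (f x) <= M) -> l2N xi ->
  ssum (abs2 (piyf phi y f xi)) <= M ^+ 2 * ssum (abs2 xi).
Proof.
move=> M0 fM l2xi.
have := ssum_le (@abs2_ge0 _ _) (abs2_piyf_le xi M0 fM) (is_cvg_seriesZ (k := M ^+ 2) l2xi).
by rewrite /ssum lim_seriesZ.
Qed.

(* The junk value [0] for unbounded [f] is harmless: [cov_rep] only constrains
   continuous [f], which are bounded on a compact [X]. *)
Definition l2_mul f (u : l2 R) : l2 R :=
  match pselect (cbounded f) with
  | left fb => L2 (introT (asboolP _) (l2N_piyf fb (l2_l2N u)))
  | right _ => 0
  end.

Lemma l2_mulE f (u : l2 R) : cbounded f -> l2_mul f u = piyf phi y f u :> (nat -> C).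
Proof. by move=> fb; rewrite /l2_mul; case: pselect. Qed.

Lemma abs2_piyU xi : abs2 (piyU xi) = delay (abs2 xi).
Proof. by apply: funext => -[|k] //=; rewrite /abs2 /= cabs2_0. Qed.

Lemma l2N_piyU xi : l2N xi -> l2N (piyU xi).
Proof. by move=> l2xi; rewrite l2NE abs2_piyU; exact: is_cvg_series_delay. Qed.

Definition l2_shift (u : l2 R) : l2 R := L2 (introT (asboolP _) (l2N_piyU (l2_l2N u))).

Lemma l2_shift_isometry (u v : l2 R) : l2_inner (l2_shift u) (l2_shift v) = l2_inner u v.
Proof.
rewrite /l2_inner; congr Complex.
- rewrite -[RHS]ssum_delay; last exact: is_cvg_series_re_dot (l2_l2N u) (l2_l2N v).
  by congr ssum; apply: funext => -[|k] //=; rewrite /re_dot /piyU /= !(mul0r, subr0).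
- rewrite -[RHS]ssum_delay; last exact: is_cvg_series_im_dot (l2_l2N u) (l2_l2N v).
  by congr ssum; apply: funext => -[|k] //=; rewrite /im_dot /piyU /= !(mul0r, addr0).
Qed.

Lemma iter_l2_shift n (u : l2 R) : iter n l2_shift u = iter n (@piyU R) u :> (nat -> C).
Proof. by elim: n => //= n ->. Qed.

Lemma cov_rep_piy : compact [set: X] -> @cov_rep R X phi (l2_hilbert R) l2_mul l2_shift.
Proof.
move=> Xcpt; have cb f : ccont f -> cbounded f by exact: ccont_cbounded.
split.
  move=> f /cb fb; split.
    move=> a u v; apply: l2_ext => k; rewrite /= !l2_mulE // /piyf.
    change (f (iter k phi y) * (a * u k + v k) =
      a * (f (iter k phi y) * u k) + f (iter k phi y) * v k).
    by rewrite mulrDr mulrCA.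
  have [M M0 fM] := fb; exists (M ^+ 2) => u.
  by rewrite !hn2_l2 l2_mulE //; exact: ssum_abs2_piyf_le (l2_l2N u).
split.
  move=> f g /cb fb /cb gb u; apply: l2_ext => k.
  by rewrite /= !l2_mulE //; [rewrite /piyf mulrDl | exact: cboundedD].
split.
  move=> a f /cb fb u; apply: l2_ext => k.
  by rewrite /= !l2_mulE //; [rewrite /piyf -mulrA | exact: cboundedZ].
split.
  move=> f g /cb fb /cb gb u; apply: l2_ext => k.
  by rewrite /= !l2_mulE //; [rewrite /piyf mulrA | exact: cboundedM].
split.
  move=> f /cb fb u v; rewrite /= /l2_inner !l2_mulE //; last exact: cbounded_conj.
  have adjE k : piyf phi y f u k * (v k)^* = u k * (piyf phi y (fun x => (f x)^*) v k)^*.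
    rewrite /piyf; case: (f _) => a b; case: (u k) => c d; case: (v k) => p q.
    by apply/eqP; rewrite eq_complex /=; apply/andP; split; apply/eqP; ring.
  by congr Complex; congr ssum; apply: funext => k; rewrite /re_dot /im_dot adjE.
split.
  split; last exact: l2_shift_isometry.
  move=> a u v; apply: l2_ext => -[|k] //=.
  by change ((0 : C) = a * 0 + 0); rewrite mulr0 addr0.
move=> f /cb fb u; apply: l2_ext => -[|k].
  by rewrite /= l2_mulE // /piyf mulr0.
by rewrite /= !l2_mulE //; exact: (cbounded_comp phi fb).
Qed.

Lemma rep_apply_piy (G : seq (X -> C)) (u : l2 R) : compact [set: X] -> A0_elt G ->
  rep_apply (H := l2_hilbert R) l2_mul l2_shift G u = pi_y phi y G u :> (nat -> C).
Proof.
move=> Xcpt G0; apply: funext => k; rewrite /rep_apply /pi_y.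
rewrite (big_morph (fun w : l2 R => w k) (id1 := 0) (op1 := +%R)) //.
apply: eq_bigr => n _; rewrite -l2_mulE; last exact: ccont_cbounded (G0 n).
by rewrite iter_l2_shift.
Qed.

End shift_representation.

Section l2N_norm.
Variable R : realType.
Local Notation C := R[i].
Implicit Types xi eta : nat -> C.

Lemma normNE xi : normN xi = Num.sqrt (ssum (abs2 xi)).
Proof. by []. Qed.

Lemma normN_ge0 xi : 0 <= normN xi.
Proof. exact: sqrtr_ge0. Qed.

Lemma sqr_normN xi : l2N xi -> normN xi ^+ 2 = ssum (abs2 xi).
Proof. by move=> l2xi; rewrite sqr_sqrtr // ssum_ge0 //; exact: abs2_ge0. Qed.

Lemma normN_le xi (c : R) : 0 <= c -> (normN xi <= c) = (ssum (abs2 xi) <= c ^+ 2).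
Proof. by move=> c0; rewrite normNE -{1}(ger0_norm c0) -sqrtr_sqr ler_sqrt // sqr_ge0. Qed.

Lemma normN0 : normN (0 : nat -> C) = 0.
Proof.
rewrite normNE (_ : abs2 0 = 0) ?ssum0 ?sqrtr0 //.
by apply: funext => k; exact: cabs2_0.
Qed.

Lemma normN_eq0 xi k : l2N xi -> normN xi = 0 -> xi k = 0.
Proof.
move=> l2xi /(congr1 (fun r => r ^+ 2)); rewrite sqr_normN // expr0n /= => s0.
exact/cabs2_eq0/(ssum_eq0 (@abs2_ge0 _ xi) k l2xi s0).
Qed.

(* Minkowski, from [cabs2D_weighted] with the optimal weight [normN eta / normN xi] *)
Lemma normND xi eta : l2N xi -> l2N eta ->
  normN (fun k => xi k + eta k) <= normN xi + normN eta.
Proof.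
move=> l2xi l2eta.
have := normN_ge0 xi; rewrite le_eqVlt => /orP[/eqP xi0|xi_gt0].
  have -> : (fun k => xi k + eta k) = eta by apply: funext => k; rewrite normN_eq0 ?add0r.
  by rewrite -xi0 add0r.
have := normN_ge0 eta; rewrite le_eqVlt => /orP[/eqP eta0|eta_gt0].
  have -> : (fun k => xi k + eta k) = xi by apply: funext => k; rewrite (normN_eq0 k l2eta) ?addr0.
  by rewrite -eta0 addr0.
pose t := normN eta / normN xi; have t_gt0 : 0 < t by rewrite divr_gt0.
rewrite normN_le ?addr_ge0 ?normN_ge0 //.
apply: le_trans (ssum_le (@abs2_ge0 _ _) (fun k => cabs2D_weighted (xi k) (eta k) t_gt0) _) _.
  by apply: is_cvg_seriesD; exact: is_cvg_seriesZ.
rewrite (_ : (fun k => _) = (1 + t) *: abs2 xi + (1 + t^-1) *: abs2 eta) //.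
rewrite ssumZD ?ssumZ -?sqr_normN //; last exact: is_cvg_seriesZ.
by rewrite le_eqVlt; apply/orP; left; apply/eqP; rewrite /t; field; rewrite !gt_eqF.
Qed.

Lemma normN_piyU xi : l2N xi -> normN (piyU xi) = normN xi.
Proof. by move=> l2xi; rewrite !normNE abs2_piyU ssum_delay. Qed.

Lemma l2N_iter_piyU n xi : l2N xi -> l2N (iter n (@piyU R) xi).
Proof. by move=> l2xi; elim: n => //= n; exact: l2N_piyU. Qed.

Lemma normN_iter_piyU n xi : l2N xi -> normN (iter n (@piyU R) xi) = normN xi.
Proof.
move=> l2xi; elim: n => //= n IH.
by rewrite normN_piyU ?IH //; exact: l2N_iter_piyU.
Qed.

Lemma normN_piyf_le (X : topologicalType) (phi : X -> X) y (f : X -> C) M xi :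
  0 <= M -> (forall x, cabs (f x) <= M) -> l2N xi ->
  normN (piyf phi y f xi) <= M * normN xi.
Proof.
move=> M0 fM l2xi; rewrite normN_le ?mulr_ge0 ?normN_ge0 //.
by rewrite exprMn sqr_normN //; exact: ssum_abs2_piyf_le.
Qed.

Lemma l2N_sum L (g : nat -> nat -> C) : (forall n, l2N (g n)) ->
  l2N (fun k => \sum_(n < L) g n k).
Proof.
move=> l2g; elim: L => [|L IH].
  rewrite (_ : (fun k => _) = 0); first exact: l2N0.
  by apply: funext => k; rewrite big_ord0.
rewrite (_ : (fun k => _) = (fun k => \sum_(n < L) g n k + g L k)); first exact: l2ND.
by apply: funext => k; rewrite big_ord_recr.
Qed.

Lemma normN_sum_le L (g : nat -> nat -> C) : (forall n, l2N (g n)) ->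
  normN (fun k => \sum_(n < L) g n k) <= \sum_(n < L) normN (g n).
Proof.
move=> l2g; elim: L => [|L IH].
  rewrite big_ord0 (_ : (fun k => _) = 0); first by rewrite normN0.
  by apply: funext => k; rewrite big_ord0.
rewrite (_ : (fun k => _) = (fun k => \sum_(n < L) g n k + g L k)); last first.
  by apply: funext => k; rewrite big_ord_recr.
rewrite big_ord_recr /=; apply: le_trans (normND _ _) (lerD IH _) => //.
exact: l2N_sum.
Qed.

Definition l2N_bounded (T : (nat -> C) -> nat -> C) (K : R) :=
  forall xi, l2N xi -> l2N (T xi) /\ normN (T xi) <= K * normN xi.

Section operator_norm.
Variables (T : (nat -> C) -> nat -> C) (K : R).
Hypotheses (K_ge0 : 0 <= K) (T_bounded : l2N_bounded T K).

Lemma normN_le_opnormN xi : l2N xi -> normN xi <= 1 -> normN (T xi) <= opnormN T.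
Proof.
move=> l2xi xi_le1; apply: (@le_sup_image R _ _ (fun xi => normN (T xi)) K); last by split.
move=> eta [l2eta eta_le1]; apply: le_trans (T_bounded l2eta).2 _.
by rewrite -[leRHS]mulr1 ler_wpM2l.
Qed.

Lemma opnormN_ge0 : 0 <= opnormN T.
Proof.
apply: le_trans (normN_ge0 _) (@normN_le_opnormN 0 (@l2N0 R) _).
by rewrite normN0.
Qed.

Lemma opnormN_le M : (forall xi, l2N xi -> normN xi <= 1 -> normN (T xi) <= M) ->
  opnormN T <= M.
Proof.
move=> TM; apply: (@sup_image_le R _ _ (fun xi => normN (T xi))).
  by exists 0; split; [exact: l2N0 | rewrite normN0].
by move=> xi [l2xi xi_le1]; exact: TM.
Qed.

Lemma opnormN_le_bound : opnormN T <= K.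
Proof.
apply: opnormN_le => xi l2xi xi_le1; apply: le_trans (T_bounded l2xi).2 _.
by rewrite -[leRHS]mulr1 ler_wpM2l.
Qed.

End operator_norm.

End l2N_norm.

Section pi_y_norm.
Variable R : realType.
Local Notation C := R[i].
Variables (X : topologicalType) (phi : X -> X).
Hypothesis Xcpt : compact [set: X].

Lemma pi_y_bounded (G : seq (X -> C)) : A0_elt G ->
  exists2 K : R, 0 <= K & forall y, l2N_bounded (pi_y phi y G) K.
Proof.
move=> G0; have Gb n : cbounded (nth (fun=> 0) G n) by exact: ccont_cbounded (G0 n).
pose M n := s2val (cid2 (Gb n)).
have M0 n : 0 <= M n by rewrite /M; case: cid2.
have GM n x : cabs (nth (fun=> 0) G n x) <= M n by rewrite /M; case: cid2.
exists (\sum_(n < size G) M n) => [|y xi l2xi]; first exact: sumr_ge0.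
pose g n := iter n (@piyU R) (piyf phi y (nth (fun=> 0) G n) xi).
have l2g n : l2N (g n) by apply/l2N_iter_piyU/l2N_piyf.
split; first exact: (@l2N_sum _ _ g).
apply: le_trans (@normN_sum_le _ _ g l2g) _.
rewrite mulr_suml; apply: ler_sum => n _.
by rewrite normN_iter_piyU ?normN_piyf_le //; exact: l2N_piyf.
Qed.

Lemma pi_y_cauchy (Fs : nat -> seq (X -> C)) :
  (forall k, A0_elt (Fs k)) -> univ_cauchy phi Fs ->
  forall e : R, 0 < e -> exists N, forall m n, (N <= m)%N -> (N <= n)%N ->
  forall y xi, l2N xi ->
    normN (fun k => pi_y phi y (Fs m) xi k - pi_y phi y (Fs n) xi k) <= e * normN xi.
Proof.
move=> Fs0 Fs_cauchy e e_gt0; have [N FN] := Fs_cauchy e e_gt0.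
exists N => m n Nm Nn y xi l2xi.
have xiP : xi \in @l2_pred R by apply/asboolP.
have := FN m n Nm Nn (l2_hilbert R) _ _ (@cov_rep_piy R X phi y Xcpt) (L2 xiP).
rewrite !hn2_l2 (_ : (_ - _ : l2 R) =
    (fun k => pi_y phi y (Fs m) xi k - pi_y phi y (Fs n) xi k) :> (nat -> C)); last first.
  by apply: funext => k; rewrite /= !rep_apply_piy.
by rewrite normN_le ?mulr_ge0 ?normN_ge0 ?(ltW e_gt0) // exprMn sqr_normN.
Qed.

Lemma opnormN_pi_y_uniformly_cauchy (Fs : nat -> seq (X -> C)) (A : set X) :
  (forall k, A0_elt (Fs k)) -> univ_cauchy phi Fs ->
  uniformly_cauchy A (fun k y => opnormN (pi_y phi y (Fs k))).
Proof.
move=> Fs0 Fs_cauchy e e_gt0; have [N FN] := pi_y_cauchy Fs0 Fs_cauchy e_gt0.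
exists N => m n Nm Nn y _.
have [Km _ piKm] := pi_y_bounded (Fs0 m); have [Kn Kn0 piKn] := pi_y_bounded (Fs0 n).
apply: opnormN_le => xi l2xi xi_le1.
set a := pi_y phi y (Fs m) xi; set b := pi_y phi y (Fs n) xi.
have l2a : l2N a := (piKm y xi l2xi).1; have l2b : l2N b := (piKn y xi l2xi).1.
have -> : a = fun k => b k + (a k - b k) by apply: funext => k; rewrite addrC subrK.
apply: le_trans (normND l2b (l2NB l2a l2b)) _; apply: lerD.
  exact: (normN_le_opnormN Kn0 (piKn y)).
apply: le_trans (FN m n Nm Nn y xi l2xi) _.
by rewrite -[leRHS]mulr1 ler_wpM2l // ltW.
Qed.

End pi_y_norm.

Section l2Z_embedding.
Variable R : realType.
Local Notation C := R[i].
Implicit Types (xi : nat -> C) (z eta : int -> C).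

Definition zpos z : nat -> C := fun k => z (Posz k).
Definition zneg z : nat -> C := fun k => z (Negz k).

Lemma l2ZE z : l2Z z = (l2N (zpos z) /\ l2N (zneg z)).
Proof. by []. Qed.

Lemma normZE z : normZ z = Num.sqrt (ssum (abs2 (zpos z)) + ssum (abs2 (zneg z))).
Proof. by []. Qed.

Lemma sqr_normZ z : l2Z z ->
  normZ z ^+ 2 = ssum (abs2 (zpos z)) + ssum (abs2 (zneg z)).
Proof.
by move=> [l2p l2n]; rewrite normZE sqr_sqrtr // addr_ge0 // ssum_ge0 //; exact: abs2_ge0.
Qed.

Definition embed_at (n : int) xi : int -> C :=
  fun m => if n <= m then xi `|m - n|%N else 0.

Lemma embed_at_Posz (p : nat) xi :
  (l2Z (embed_at p xi) <-> l2N xi) /\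
  (l2N xi -> ssum (abs2 (zpos (embed_at p xi))) + ssum (abs2 (zneg (embed_at p xi))) =
    ssum (abs2 xi)).
Proof.
set b := abs2 (zpos (embed_at p xi)).
have b_shift : (fun k => b (k + p)%N) = abs2 xi.
  by apply: funext => k; rewrite /b /abs2 /zpos /embed_at ifT; [congr (cabs2 (xi _)) |]; lia.
have b_head : series b p = 0.
  rewrite /series /= big_nat_cond big1 // => k /andP[/andP[_ kp] _].
  by rewrite /b /abs2 /zpos /embed_at ifF ?cabs2_0 //; lia.
have cvg_b : cvgn (series b) <-> l2N xi.
  by rewrite l2NE -b_shift; exact: iff_sym (is_cvg_series_shift b p).
have zneg0 : abs2 (zneg (embed_at p xi)) = 0 by apply: funext => k; exact: cabs2_0.
rewrite l2ZE [l2N (zneg _)]l2NE zneg0; split.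
  split=> [[cb _]|l2xi]; first exact/cvg_b.
  by split; [exact/cvg_b | exact: is_cvg_series0].
move=> l2xi; rewrite ssum0 addr0 (ssum_shift p) ?b_shift ?b_head ?add0r //.
exact/cvg_b.
Qed.

Lemma embed_at_Negz q xi :
  (l2Z (embed_at (Negz q) xi) <-> l2N xi) /\
  (l2N xi -> ssum (abs2 (zpos (embed_at (Negz q) xi))) +
    ssum (abs2 (zneg (embed_at (Negz q) xi))) = ssum (abs2 xi)).
Proof.
set c := abs2 (zneg (embed_at (Negz q) xi)).
have c_tail : (fun k => c (k + q.+1)%N) = 0.
  by apply: funext => k; rewrite /c /abs2 /zneg /embed_at ifF ?cabs2_0 //; lia.
have cvg_c : cvgn (series c).
  by apply/(is_cvg_series_shift c q.+1); rewrite c_tail; exact: is_cvg_series0.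
have ssum_c : ssum c = series (abs2 xi) q.+1.
  rewrite (ssum_shift q.+1 cvg_c) c_tail ssum0 addr0 /series /= [RHS]big_nat_rev /= add0n.
  apply: eq_big_nat => k /andP[_ kq]; rewrite /c /abs2 /zneg /embed_at ifT; last by lia.
  by congr (cabs2 (xi _)); lia.
have zposE : abs2 (zpos (embed_at (Negz q) xi)) = fun k => abs2 xi (k + q.+1)%N by [].
rewrite l2ZE l2NE zposE; split.
  split=> [[cp _]|l2xi]; first exact/(is_cvg_series_shift _ q.+1).
  by split; first exact/(is_cvg_series_shift _ q.+1).
by move=> l2xi; rewrite ssum_c (ssum_shift q.+1 l2xi) addrC.
Qed.

Lemma l2Z_embed n xi : l2Z (embed_at n xi) <-> l2N xi.
Proof. by case: n => [p|q]; [exact: (embed_at_Posz p xi).1 | exact: (embed_at_Negz q xi).1]. Qed.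

Lemma normZ_embed n xi : l2N xi -> normZ (embed_at n xi) = normN xi.
Proof.
move=> l2xi; rewrite normZE normNE; congr Num.sqrt.
by case: n => [p|q]; [exact: (embed_at_Posz p xi).2 | exact: (embed_at_Negz q xi).2].
Qed.

Definition truncate (n : int) z : int -> C := fun m => if n <= m then z m else 0.

Lemma truncateE n z : truncate n z = embed_at n (fun j => z (n + j%:Z)).
Proof. by apply: funext => m; rewrite /truncate /embed_at; case: ifPn => // nm; congr z; lia. Qed.

Lemma truncate_l2Z n z : l2Z z -> l2Z (truncate n z) /\ normZ (truncate n z) <= normZ z.
Proof.
move=> [l2p l2n].
have abs2_le (i : nat -> int) k :
    abs2 (fun k => truncate n z (i k)) k <= abs2 (fun k => z (i k)) k.
  by rewrite /abs2 /truncate; case: ifPn => _ //; rewrite cabs2_0 cabs2_ge0.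
have cp := is_cvg_series_le (@abs2_ge0 _ _) (abs2_le Posz) l2p.
have cn := is_cvg_series_le (@abs2_ge0 _ _) (abs2_le Negz) l2n.
split=> //; rewrite !normZE ler_sqrt; last by rewrite addr_ge0 // ssum_ge0 //; exact: abs2_ge0.
have le_pos := ssum_le (@abs2_ge0 _ _) (abs2_le Posz) l2p.
have le_neg := ssum_le (@abs2_ge0 _ _) (abs2_le Negz) l2n.
exact: lerD le_pos le_neg.
Qed.

Lemma normZ_le_partial z (s : R) : 0 <= s ->
  (forall K, series (abs2 (zpos z)) K + series (abs2 (zneg z)) K <= s ^+ 2) ->
  l2Z z /\ normZ z <= s.
Proof.
move=> s0 zs.
have cp : l2N (zpos z).
  apply: (is_cvg_series_ub (@abs2_ge0 _ _) (M := s ^+ 2)) => K; apply: le_trans (zs K).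
  by rewrite lerDl /series /= sumr_ge0 // => k _; exact: abs2_ge0.
have cn : l2N (zneg z).
  apply: (is_cvg_series_ub (@abs2_ge0 _ _) (M := s ^+ 2)) => K; apply: le_trans (zs K).
  by rewrite lerDr /series /= sumr_ge0 // => k _; exact: abs2_ge0.
split=> //; rewrite normZE -(ger0_norm s0) -sqrtr_sqr ler_sqrt ?sqr_ge0 //.
have cv : (fun K => series (abs2 (zpos z)) K + series (abs2 (zneg z)) K) @ \oo -->
    ssum (abs2 (zpos z)) + ssum (abs2 (zneg z)) by exact: cvgD.
by rewrite -(cvg_lim _ cv) //; apply: limr_le; [apply/cvg_ex; eexists; exact: cv | exact: nearW].
Qed.

End l2Z_embedding.

Section bilateral_representation.
Variable R : realType.
Local Notation C := R[i].
Variables (X : topologicalType) (phi psi : X -> X).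
Hypothesis psiK : cancel psi phi.
Local Notation zit := (zit phi psi).

Lemma zitS (n : int) x : phi (zit n x) = zit (n + 1) x.
Proof.
case: n => [k|[|k]]; first by rewrite (_ : Posz k + 1 = Posz k.+1) //; lia.
  by rewrite /= psiK.
by rewrite (_ : Negz k.+1 + 1 = Negz k) /= ?psiK //; lia.
Qed.

Lemma iter_zit k (n : int) x : iter k phi (zit n x) = zit (n + k%:Z) x.
Proof. by elim: k => [|k IH]; rewrite ?addr0 // iterS IH zitS; congr zit; lia. Qed.

Lemma iter_PiU j (z : int -> C) m : iter j (@PiU R) z m = z (m - j%:Z).
Proof. by elim: j m => [|j IH] m; rewrite ?subr0 // iterS /PiU IH; congr z; lia. Qed.

Lemma iter_piyU j (xi : nat -> C) k :
  iter j (@piyU R) xi k = if (j <= k)%N then xi (k - j)%N else 0.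
Proof. by elim: j k => [|j IH] [|k] //=; rewrite ?subn0 // IH subSS. Qed.

Lemma Pi_x_embed x (G : seq (X -> C)) (n : int) (xi : nat -> C) :
  Pi_x phi psi x G (embed_at n xi) = embed_at n (pi_y phi (zit n x) G xi).
Proof.
apply: funext => m; rewrite /Pi_x /pi_y /embed_at; case: ifPn => nm; last first.
  by apply: big1 => j _; rewrite iter_PiU /Pif ifF ?mulr0 //; move: nm; lia.
set d := `|m - n|%N; have md : m = n + d%:Z by rewrite /d; lia.
apply: eq_bigr => j _; rewrite iter_PiU iter_piyU /Pif /piyf.
have -> : (n <= m - j%:Z) = (j <= d)%N by rewrite md; lia.
case: ifPn => jd; last by rewrite mulr0.
rewrite iter_zit; congr (nth _ G j (zit _ x) * xi _); rewrite md; lia.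
Qed.

Hypothesis Xcpt : compact [set: X].
Variables (x : X) (G : seq (X -> C)).
Hypothesis G0 : A0_elt G.

Lemma normZ_Pi_x_le M : (forall n : int, opnormN (pi_y phi (zit n x) G) <= M) ->
  forall eta, l2Z eta -> normZ eta <= 1 -> normZ (Pi_x phi psi x G eta) <= M.
Proof.
move=> GM eta l2eta eta_le1; have [K K0 GK] := pi_y_bounded phi Xcpt G0.
have M0 : 0 <= M by apply: le_trans (opnormN_ge0 K0 (GK _)) (GM 0).
apply: (normZ_le_partial M0 _).2 => W.
pose n0 := Negz (W + size G); pose xi j := eta (n0 + j%:Z).
have [l2trunc trunc_le] := truncate_l2Z n0 l2eta.
rewrite truncateE -/xi in l2trunc trunc_le.
have l2xi : l2N xi by exact/(l2Z_embed n0).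
have [l2pi _] := GK (zit n0 x) xi l2xi.
set E := embed_at n0 (pi_y phi (zit n0 x) G xi).
have l2E : l2Z E by exact/l2Z_embed.
(* [Pi_x] moves entries by less than [size G], so on [[-W, W)] it only reads [eta] beyond [n0]. *)
have windowE m : n0 + (size G)%:Z <= m -> Pi_x phi psi x G eta m = E m.
  move=> m_ge; rewrite /E -Pi_x_embed; apply: eq_bigr => j _.
  rewrite !iter_PiU /Pif -truncateE /truncate ifT //.
  by have := ltn_ord j; lia.
have -> : series (abs2 (zpos (Pi_x phi psi x G eta))) W = series (abs2 (zpos E)) W.
  by apply: eq_big_nat => k /andP[_ kW]; rewrite /abs2 /zpos windowE //; lia.
have -> : series (abs2 (zneg (Pi_x phi psi x G eta))) W = series (abs2 (zneg E)) W.
  by apply: eq_big_nat => k /andP[_ kW]; rewrite /abs2 /zneg windowE //; lia.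
have [l2Ep l2En] := l2E.
apply: le_trans (lerD (ler_series_ssum (@abs2_ge0 _ _) W l2Ep)
  (ler_series_ssum (@abs2_ge0 _ _) W l2En)) _.
rewrite -sqr_normZ // normZ_embed // lerXn2r ?nnegrE ?normN_ge0 //.
apply: le_trans (GM n0); apply: (normN_le_opnormN K0 (GK _) l2xi).
by rewrite -(normZ_embed n0 l2xi); apply: le_trans trunc_le eta_le1.
Qed.

Lemma opnormZ_Pi_x_le M : (forall n : int, opnormN (pi_y phi (zit n x) G) <= M) ->
  opnormZ (Pi_x phi psi x G) <= M.
Proof.
move=> GM; apply: (@sup_image_le R _ _ (fun eta => normZ (Pi_x phi psi x G eta))).
  exists (embed_at 0 0); split; first exact/l2Z_embed/l2N0.
  by rewrite normZ_embed ?normN0 //; exact: l2N0.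
by move=> eta [l2eta eta_le1]; exact: normZ_Pi_x_le.
Qed.

Lemma opnormN_pi_y_le_opnormZ (n : int) :
  opnormN (pi_y phi (zit n x) G) <= opnormZ (Pi_x phi psi x G).
Proof.
have [K K0 GK] := pi_y_bounded phi Xcpt G0.
apply: opnormN_le => xi l2xi xi_le1; have [l2pi _] := GK (zit n x) xi l2xi.
rewrite -(normZ_embed n l2pi) -Pi_x_embed.
apply: (@le_sup_image R _ _ (fun eta => normZ (Pi_x phi psi x G eta)) K).
  by move=> eta [l2eta eta_le1]; apply: normZ_Pi_x_le => // m; exact: opnormN_le_bound K0 (GK _).
by split; [exact/l2Z_embed | rewrite normZ_embed].
Qed.

Lemma opnormZ_Pi_x_sup :
  opnormZ (Pi_x phi psi x G) = sup [set opnormN (pi_y phi y G) | y in zorbit phi psi x].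
Proof.
have [K K0 GK] := pi_y_bounded phi Xcpt G0.
apply/eqP; rewrite eq_le; apply/andP; split.
  apply: opnormZ_Pi_x_le => n.
  apply: (@le_sup_image R _ _ (fun y => opnormN (pi_y phi y G)) K); last by exists n.
  by move=> y _; exact: opnormN_le_bound K0 (GK y).
apply: sup_image_le => [|_ [n _ <-]]; last exact: opnormN_pi_y_le_opnormZ.
by exists x, 0.
Qed.

End bilateral_representation.

Unset Implicit Arguments.
Set Strict Implicit.

Theorem lemma6 (R : realType) (X : topologicalType) (phi psi : X -> X)
    (Xcpt : compact [set: X]) (Xhaus : hausdorff_space X)
    (phi_cont : continuous phi) (psi_cont : continuous psi)
    (phiK : cancel phi psi) (psiK : cancel psi phi)
    (Fs : nat -> seq (X -> R[i]))
    (FsA0 : forall k, A0_elt (Fs k))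
    (Fs_cauchy : univ_cauchy phi Fs)
    (x : X) :
  norm_Pi_x phi psi x Fs =
  sup [set norm_pi_y phi y Fs | y in zorbit phi psi x].
Proof.
rewrite /norm_Pi_x; under eq_fun do rewrite (opnormZ_Pi_x_sup psiK Xcpt x (FsA0 _)).
apply: limn_sup_uniformly_cauchy; first by exists x, 0.
  move=> k; have [K K0 FK] := pi_y_bounded phi Xcpt (FsA0 k).
  by exists K => y _; exact: opnormN_le_bound K0 (FK y).
exact: opnormN_pi_y_uniformly_cauchy.
Qed.
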